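(* Let $(\Sigma,E)$ be an algebraic theory with free monad $(T,\eta,\mu)$. For every $T$-semialgebra $\alpha:TX\to X$ and every operation symbol $(\mathsf{op}:n)\in\Sigma$, we have $\alpha\circ\mathsf{op}^{TX}=\alpha\circ\mathsf{op}^{TX}\circ(\eta_X)^n\circ\alpha^n$ as maps $(TX)^n\to X$.
   Context: The free monad $T=T_{\Sigma,E}$ sends a set $X$ to the set $TX$ of $\Sigma$-terms over $X$ modulo the smallest congruence containing all substitution instances of equations of $E$ (class of $t$ written $\overline{t}$); $TX$ is a $(\Sigma,E)$-algebra with $\mathsf{op}^{TX}(\overline{t_1},\dots,\overline{t_n})=\overline{\mathsf{op}(t_1,\dots,t_n)}$; $\eta_X(x)=\overline{x}$; $\mu_X$ flattens terms, $\overline{t[\overline{t_i}/v_i]}\mapsto\overline{t[t_i/v_i]}$. A $T$-semialgebra is a map $\alpha:TX\to X$ with $\alpha\circ\mu_X=\alpha\circ T\alpha$ (the unit law $\alpha\circ\eta_X=\mathrm{id}$ is not required). *)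

From mathcomp Require Import all_boot.
From Stdlib Require Import ClassicalEpsilon.

Set Implicit Arguments.
Unset Strict Implicit.
Unset Printing Implicit Defensive.

Record signature := Signature {
  sym : Type;
  arity : sym -> nat
}.

Inductive term (S : signature) (X : Type) : Type :=
| Var : X -> term S X
| Op : forall o : sym S, ('I_(arity o) -> term S X) -> term S X.

Arguments Var {S X} _.
Arguments Op {S X} o _.

Fixpoint bind (S : signature) (X Y : Type) (f : X -> term S Y) (t : term S X)
  : term S Y :=
  match t with
  | Var x => f x
  | Op o ts => Op o (fun i => bind f (ts i))
  end.

Definition tmap (S : signature) (X Y : Type) (f : X -> Y) (t : term S X)
  : term S Y := bind (fun x => Var (f x)) t.

Record theory (S : signature) := Theory {
  eqn : Type;
  eqn_vars : eqn -> Type;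
  eqn_lhs : forall e : eqn, term S (eqn_vars e);
  eqn_rhs : forall e : eqn, term S (eqn_vars e)
}.

Inductive cong (S : signature) (E : theory S) (X : Type)
  : term S X -> term S X -> Prop :=
| cong_inst : forall (e : eqn E) (s : eqn_vars e -> term S X),
    cong E (bind s (eqn_lhs e)) (bind s (eqn_rhs e))
| cong_refl : forall t, cong E t t
| cong_sym : forall t u, cong E t u -> cong E u t
| cong_trans : forall t u v, cong E t u -> cong E u v -> cong E t v
| cong_op : forall (o : sym S) (ts us : 'I_(arity o) -> term S X),
    (forall i, cong E (ts i) (us i)) -> cong E (Op o ts) (Op o us).

Definition T (S : signature) (E : theory S) (X : Type) : Type :=
  { P : term S X -> Prop | exists t, P = cong E t }.

Definition cls (S : signature) (E : theory S) (X : Type) (t : term S X)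
  : T E X := exist _ (cong E t) (ex_intro _ t erefl).

Definition repr (S : signature) (E : theory S) (X : Type) (c : T E X)
  : term S X := proj1_sig (constructive_indefinite_description _ (proj2_sig c)).

Definition opT (S : signature) (E : theory S) (X : Type) (o : sym S)
  (cs : 'I_(arity o) -> T E X) : T E X :=
  cls E (Op o (fun i => repr (cs i))).

Definition eta (S : signature) (E : theory S) (X : Type) (x : X) : T E X :=
  cls E (Var x).

Definition mu (S : signature) (E : theory S) (X : Type) (c : T E (T E X))
  : T E X := cls E (bind (fun c' : T E X => repr c') (repr c)).

Definition Tmap (S : signature) (E : theory S) (X Y : Type) (f : X -> Y)
  (c : T E X) : T E Y := cls E (tmap f (repr c)).

(* T-semialgebra: alpha o mu_X = alpha o T alpha (no unit law). *)
Definition semialgebra (S : signature) (E : theory S) (X : Type)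
  (alpha : T E X -> X) : Prop :=
  forall c : T E (T E X), alpha (mu c) = alpha (Tmap alpha c).
Arguments opT {S} E {X} o cs.

From Pilot Require Import Defs.
From mathcomp Require Import all_boot.
From Stdlib Require Import ClassicalEpsilon ProofIrrelevance FunctionalExtensionality PropExtensionality.

(* Apply the semialgebra law to the class of the depth-one term
   op(c_1, ..., c_n) in T(TX), whose variables are the classes c_i.
   Flattening it with mu gives op^{TX}(c_1, ..., c_n), while relabelling its
   variables with alpha gives op(alpha c_1, ..., alpha c_n), which as an
   element of TX is op^{TX}(eta (alpha c_1), ..., eta (alpha c_n)). *)

Section FreeMonad.

Variables (S : signature) (E : theory S).

Lemma bind_bind (X Y Z : Type) (f : Y -> term S Z) (s : X -> term S Y)
    (t : term S X) :
  bind f (bind s t) = bind (fun v => bind f (s v)) t.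
Proof.
elim: t => [x|o ts IH] //=.
by congr (Op o); apply: functional_extensionality => i; apply: IH.
Qed.

Lemma cong_bind (X Y : Type) (f : X -> term S Y) (t u : term S X) :
  cong E t u -> cong E (bind f t) (bind f u).
Proof.
elim=> {t u} [e s|t|t u _ IH|t u v _ IHtu _ IHuv|o ts us _ IH] /=.
- by rewrite !bind_bind; apply: cong_inst.
- exact: cong_refl.
- exact: cong_sym.
- exact: cong_trans IHtu IHuv.
- by apply: cong_op.
Qed.

Lemma cls_cong (X : Type) (t u : term S X) : cong E t u -> cls E t = cls E u.
Proof.
move=> Ctu; apply: eq_sig_hprop => [P p q|/=]; first exact: proof_irrelevance.
apply: functional_extensionality => v; apply: propositional_extensionality.
by split=> [Ctv|Cuv]; [apply: cong_trans (cong_sym Ctu) Ctv | apply: cong_trans Ctu Cuv].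
Qed.

Lemma cong_repr_cls (X : Type) (t : term S X) : cong E (Defs.repr (cls E t)) t.
Proof.
rewrite /Defs.repr; case: constructive_indefinite_description => u /= e.
by rewrite -e; apply: cong_refl.
Qed.

Lemma mu_cls (X : Type) (t : term S (T E X)) :
  mu (cls E t) = cls E (bind (@Defs.repr S E X) t).
Proof. by apply: cls_cong; apply: cong_bind; apply: cong_repr_cls. Qed.

Lemma Tmap_cls (X Y : Type) (f : X -> Y) (t : term S X) :
  Tmap f (cls E t) = cls E (tmap f t).
Proof. by apply: cls_cong; apply: cong_bind; apply: cong_repr_cls. Qed.

Lemma opT_cls (X : Type) (o : sym S) (ts : 'I_(arity o) -> term S X) :
  opT E o (fun i => cls E (ts i)) = cls E (Op o ts).
Proof. by apply: cls_cong; apply: cong_op => i; apply: cong_repr_cls. Qed.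

End FreeMonad.

Theorem lemma8 (S : signature) (E : theory S) (X : Type)
  (alpha : T E X -> X) (Halpha : semialgebra alpha)
  (o : sym S) (cs : 'I_(arity o) -> T E X) :
  alpha (opT E o cs) = alpha (opT E o (fun i => eta E (alpha (cs i)))).
Proof.
pose c : T E (T E X) := cls E (Op o (fun i => Var (cs i))).
have mu_c : mu c = opT E o cs by rewrite mu_cls.
have Tmap_c : Tmap alpha c = opT E o (fun i => eta E (alpha (cs i))).
  by rewrite Tmap_cls /eta opT_cls.
by rewrite -mu_c -Tmap_c Halpha.
Qed.
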